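(* Let $\mathcal K$ be a 2-category which admits Eilenberg–Moore constructions for monads, and let $(V,\psi):(t,\mu,\eta)\to(t',\mu',\eta')$ be a 1-cell in $\mathrm{EM}^w(\mathcal K)$. Then the 2-cell $Vv\epsilon\ast\psi v\ast\eta'Vv:Vv\Rightarrow Vv$ in $\mathcal K$ is idempotent, and the identities $V\mu\ast\psi t\ast\eta'Vt\ast\psi=\psi$ and $Vv\epsilon\ast\psi v\ast t'Vv\epsilon\ast t'\psi v\ast t'\eta'Vv=Vv\epsilon\ast\psi v$ hold.
   Context: Conventions in a 2-category $\mathcal K$: horizontal composition and whiskering by juxtaposition in the order of functor composition; identity 1-cell of $k$ written $k$, identity 2-cell of $V$ written $V$; vertical composition $\ast$ with $\alpha\ast\beta$ meaning $\beta$ then $\alpha$. A monad $(t,\mu,\eta)$ on $k$: $t:k\to k$, $\mu:tt\Rightarrow t$, $\eta:k\Rightarrow t$, associative and unital. A 1-cell $(t,\mu,\eta)\to(t',\mu',\eta')$ in $\mathrm{EM}^w(\mathcal K)$ ($t$ on $k$, $t'$ on $k'$) is a pair $(V,\psi)$ with $V:k\to k'$ and $\psi:t'V\Rightarrow Vt$ satisfying $V\mu\ast\psi t\ast t'\psi=\psi\ast\mu'V$. $\mathcal K$ admits Eilenberg–Moore constructions for monads means: the inclusion 2-functor from $\mathcal K$ into the Lack–Street 2-category $\mathrm{EM}(\mathcal K)$ of monads has a right 2-adjoint $J$. Consequently every monad $(t,\mu,\eta)$ on $k$ determines an adjunction $f\dashv v$ in $\mathcal K$ with $f:k\to J(t)$,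 $v:J(t)\to k$, unit $\eta:k\Rightarrow vf$ and counit $\epsilon:fv\Rightarrow J(t)$, such that $t=vf$ and $\mu=v\epsilon f$. For $t'$ the corresponding data are $f',v',\eta',\epsilon'$. *)

Set Implicit Arguments.
Unset Strict Implicit.

(** * Data of a (strict) 2-category.
    [comp1 g f] is g∘f (order of functor composition), [vcomp a b] is
    a ∗ b ("b then a"), [hcomp a b] is horizontal composition a b. *)
Record PreTwoCat := {
  Ob : Type;
  Hom : Ob -> Ob -> Type;
  Cell : forall {a b : Ob}, Hom a b -> Hom a b -> Type;
  id1 : forall a : Ob, Hom a a;
  comp1 : forall {a b c : Ob}, Hom b c -> Hom a b -> Hom a c;
  id2 : forall {a b : Ob} (f : Hom a b), Cell f f;
  vcomp : forall {a b : Ob} {f g h : Hom a b}, Cell g h -> Cell f g -> Cell f h;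
  hcomp : forall {a b c : Ob} {g g' : Hom b c} {f f' : Hom a b},
      Cell g g' -> Cell f f' -> Cell (comp1 g f) (comp1 g' f')
}.

Arguments Hom {p} _ _.
Arguments Cell {p a b} _ _.
Arguments id1 {p} _.
Arguments comp1 {p a b c} _ _.
Arguments id2 {p a b} _.
Arguments vcomp {p a b f g h} _ _.
Arguments hcomp {p a b c g g' f f'} _ _.

(** The identity 2-cell transported along an equality of 1-cells
    (used only to make the strict identifications of 1-cells explicit). *)
Definition eqcell {K : PreTwoCat} {a b : Ob K} {f g : Hom a b} (e : f = g)
  : Cell f g :=
  match e in _ = y return Cell f y with eq_refl => id2 f end.

(** * Axioms of a strict 2-category (a Cat-enriched category whose
    hom-categories have a *set* of objects: [hom_uip]). *)
Record is_TwoCat (K : PreTwoCat) : Prop := {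
  comp1_assoc : forall {a b c d : Ob K} (h : Hom c d) (g : Hom b c) (f : Hom a b),
      comp1 h (comp1 g f) = comp1 (comp1 h g) f;
  comp1_idl : forall {a b : Ob K} (f : Hom a b), comp1 (id1 b) f = f;
  comp1_idr : forall {a b : Ob K} (f : Hom a b), comp1 f (id1 a) = f;
  hom_uip : forall {a b : Ob K} (f g : Hom a b) (p q : f = g), p = q;
  vcomp_assoc : forall {a b : Ob K} (f g h i : Hom a b)
      (x : Cell h i) (y : Cell g h) (z : Cell f g),
      vcomp x (vcomp y z) = vcomp (vcomp x y) z;
  vcomp_idl : forall {a b : Ob K} (f g : Hom a b) (x : Cell f g), vcomp (id2 g) x = x;
  vcomp_idr : forall {a b : Ob K} (f g : Hom a b) (x : Cell f g), vcomp x (id2 f) = x;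
  hcomp_id2 : forall {a b c : Ob K} (g : Hom b c) (f : Hom a b),
      hcomp (id2 g) (id2 f) = id2 (comp1 g f);
  interchange : forall {a b c : Ob K} (g g' g'' : Hom b c) (f f' f'' : Hom a b)
      (x' : Cell g' g'') (x : Cell g g') (y' : Cell f' f'') (y : Cell f f'),
      hcomp (vcomp x' x) (vcomp y' y) = vcomp (hcomp x' y') (hcomp x y);
  hcomp_assoc : forall {a b c d : Ob K} (h h' : Hom c d) (g g' : Hom b c)
      (f f' : Hom a b) (x : Cell h h') (y : Cell g g') (z : Cell f f'),
      vcomp (eqcell (comp1_assoc h' g' f')) (hcomp x (hcomp y z))
      = vcomp (hcomp (hcomp x y) z) (eqcell (comp1_assoc h g f));
  hcomp_idl : forall {a b : Ob K} (f f' : Hom a b) (x : Cell f f'),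
      vcomp (eqcell (comp1_idl f')) (hcomp (id2 (id1 b)) x)
      = vcomp x (eqcell (comp1_idl f));
  hcomp_idr : forall {a b : Ob K} (f f' : Hom a b) (x : Cell f f'),
      vcomp (eqcell (comp1_idr f')) (hcomp x (id2 (id1 a)))
      = vcomp x (eqcell (comp1_idr f))
}.

Section TwoCatDefs.
Context {K : PreTwoCat} (HK : is_TwoCat K).

Definition lw {a b c : Ob K} (g : Hom b c) {f f' : Hom a b} (x : Cell f f')
  : Cell (comp1 g f) (comp1 g f') := hcomp (id2 g) x.
Definition rw {a b c : Ob K} {g g' : Hom b c} (x : Cell g g') (f : Hom a b)
  : Cell (comp1 g f) (comp1 g' f) := hcomp x (id2 f).

Definition is_monad {k : Ob K} (t : Hom k k) (mu : Cell (comp1 t t) t)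
  (eta : Cell (id1 k) t) : Prop :=
  vcomp mu (lw t mu)
    = vcomp mu (vcomp (rw mu t) (eqcell (comp1_assoc HK t t t)))
  /\ vcomp mu (vcomp (rw eta t) (eqcell (eq_sym (comp1_idl HK t)))) = id2 t
  /\ vcomp mu (vcomp (lw t eta) (eqcell (eq_sym (comp1_idr HK t)))) = id2 t.

Definition is_EMw_1cell {k k' : Ob K}
  (t : Hom k k) (mu : Cell (comp1 t t) t)
  (t' : Hom k' k') (mu' : Cell (comp1 t' t') t')
  (V : Hom k k') (psi : Cell (comp1 t' V) (comp1 V t)) : Prop :=
  vcomp (lw V mu) (vcomp (eqcell (eq_sym (comp1_assoc HK V t t)))
    (vcomp (rw psi t) (vcomp (eqcell (comp1_assoc HK t' V t)) (lw t' psi))))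
  = vcomp psi (vcomp (rw mu' V) (eqcell (comp1_assoc HK t' t' V))).

Lemma res_eq_tt {k j : Ob K} (t : Hom k k) (f : Hom k j) (v : Hom j k) :
  t = comp1 v f -> comp1 t t = comp1 (comp1 v (comp1 f v)) f.
Proof.
  intros Ht; subst t.
  rewrite <- (comp1_assoc HK v f (comp1 v f)).
  rewrite (comp1_assoc HK f v f).
  rewrite (comp1_assoc HK v (comp1 f v) f).
  reflexivity.
Qed.

Lemma res_eq_t {k j : Ob K} (t : Hom k k) (f : Hom k j) (v : Hom j k) :
  t = comp1 v f -> comp1 (comp1 v (id1 j)) f = t.
Proof. intros Ht; rewrite (comp1_idr HK v); symmetry; exact Ht. Qed.

Lemma res_eq_Vtv {k j k' : Ob K} (t : Hom k k) (f : Hom k j) (v : Hom j k)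
  (V : Hom k k') :
  t = comp1 v f -> comp1 (comp1 V t) v = comp1 (comp1 V v) (comp1 f v).
Proof.
  intros Ht; subst t.
  rewrite (comp1_assoc HK V v f).
  rewrite <- (comp1_assoc HK (comp1 V v) f v).
  reflexivity.
Qed.

Definition res_unit {k j : Ob K} (t : Hom k k) (f : Hom k j) (v : Hom j k)
  (Ht : t = comp1 v f) (eta : Cell (id1 k) t) : Cell (id1 k) (comp1 v f) :=
  vcomp (eqcell Ht) eta.

Definition is_resolution {k j : Ob K} (t : Hom k k) (mu : Cell (comp1 t t) t)
  (eta : Cell (id1 k) t) (f : Hom k j) (v : Hom j k)
  (eps : Cell (comp1 f v) (id1 j)) (Ht : t = comp1 v f) : Prop :=
  mu = vcomp (eqcell (res_eq_t Ht)) (vcomp (rw (lw v eps) f) (eqcell (res_eq_tt Ht)))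
  /\ vcomp (eqcell (comp1_idl HK f)) (vcomp (rw eps f)
       (vcomp (eqcell (comp1_assoc HK f v f))
         (vcomp (lw f (res_unit Ht eta)) (eqcell (eq_sym (comp1_idr HK f))))))
     = id2 f
  /\ vcomp (eqcell (comp1_idr HK v)) (vcomp (lw v eps)
       (vcomp (eqcell (eq_sym (comp1_assoc HK v f v)))
         (vcomp (rw (res_unit Ht eta) v) (eqcell (eq_sym (comp1_idl HK v))))))
     = id2 v.

Definition cell_eta'Vv {k j k' : Ob K} (t' : Hom k' k') (eta' : Cell (id1 k') t')
  (V : Hom k k') (v : Hom j k) : Cell (comp1 V v) (comp1 t' (comp1 V v)) :=
  vcomp (rw eta' (comp1 V v)) (eqcell (eq_sym (comp1_idl HK (comp1 V v)))).

Definition cell_psiv {k j k' : Ob K} (t : Hom k k) (t' : Hom k' k')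
  (V : Hom k k') (psi : Cell (comp1 t' V) (comp1 V t)) (v : Hom j k)
  : Cell (comp1 t' (comp1 V v)) (comp1 (comp1 V t) v) :=
  vcomp (rw psi v) (eqcell (comp1_assoc HK t' V v)).

Definition cell_Vveps {k j k' : Ob K} (t : Hom k k) (f : Hom k j) (v : Hom j k)
  (Ht : t = comp1 v f) (eps : Cell (comp1 f v) (id1 j)) (V : Hom k k')
  : Cell (comp1 (comp1 V t) v) (comp1 V v) :=
  vcomp (eqcell (comp1_idr HK (comp1 V v)))
    (vcomp (lw (comp1 V v) eps) (eqcell (res_eq_Vtv V Ht))).

End TwoCatDefs.

From Stdlib Require Import ClassicalEpsilon EqdepFacts.

(* Writing e = Vv eps * psi v * eta' V v: by naturality of psi, the composite
   Vv eps * psi v * t' Vv eps * t' psi v equals Vv eps * V v f v eps * psi t v, and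
   v eps * v f v eps = v eps * mu v because mu = v eps f; so it becomes
   Vv eps * (V mu * psi t * t' psi) v = Vv eps * psi v * mu' V v, and the unit law
   mu' * t' eta' = 1 gives the third identity. The second identity is the same
   computation with eta' on the other side. For idempotence, naturality of eta'
   slides the middle eta' V v of e * e to the right, where it meets the left side
   of the third identity. *)

(* A 2-cell packed together with its source and target, so that cells between
   1-cells that are equal only propositionally can be compared and composed.
   Composing cells whose endpoints do not match yields the junk value [None]. *)
Definition pcell {K : PreTwoCat} (a b : Ob K) :=
  {f : Hom a b & {g : Hom a b & option (Cell f g)}}.

Section Packing.
Context {K : PreTwoCat} (HK : is_TwoCat K).

Definition src {a b : Ob K} (X : pcell a b) : Hom a b := projT1 X.
Definition tgt {a b : Ob K} (X : pcell a b) : Hom a b := projT1 (projT2 X).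
Definition cell_of {a b : Ob K} (X : pcell a b) : option (Cell (src X) (tgt X)) :=
  projT2 (projT2 X).

Definition pack {a b : Ob K} {f g : Hom a b} (x : Cell f g) : pcell a b :=
  existT _ f (existT _ g (Some x)).
Definition pid {a b : Ob K} (f : Hom a b) : pcell a b := pack (id2 f).

Definition pvcomp {a b : Ob K} (X Y : pcell a b) : pcell a b :=
  existT _ (src Y) (existT _ (tgt X)
   (match excluded_middle_informative (tgt Y = src X) with
    | left e => match cell_of X, cell_of Y with
                | Some x, Some y => Some (vcomp x (vcomp (eqcell e) y))
                | _, _ => None end
    | right _ => None end)).

Definition phcomp {a b c : Ob K} (X : pcell b c) (Y : pcell a b) : pcell a c :=
  existT _ (comp1 (src X) (src Y)) (existT _ (comp1 (tgt X) (tgt Y))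
   (match cell_of X, cell_of Y with
    | Some x, Some y => Some (hcomp x y)
    | _, _ => None end)).

Lemma hom_uip_refl {a b : Ob K} {f : Hom a b} (e : f = f) : e = eq_refl.
Proof. apply (hom_uip HK). Qed.

Lemma pack_inj {a b : Ob K} {f g : Hom a b} (x y : Cell f g) : pack x = pack y -> x = y.
Proof.
  assert (inj_pair : Inj_dep_pairT (Hom a b)).
  { apply eq_dep_eq__inj_pairT2, eq_rect_eq__eq_dep_eq, Streicher_K__eq_rect_eq,
      UIP_refl__Streicher_K, UIP__UIP_refl.
    intros f1 f2 p q; apply (hom_uip HK). }
  unfold pack; intro E.
  apply inj_pair in E; apply inj_pair in E.
  injection E; auto.
Qed.

Lemma pack_vcomp {a b : Ob K} {f g h : Hom a b} (x : Cell g h) (y : Cell f g) :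
  pack (vcomp x y) = pvcomp (pack x) (pack y).
Proof.
  unfold pvcomp, src, tgt, cell_of, pack; simpl.
  destruct (excluded_middle_informative (g = g)) as [e|ne]; [|contradiction].
  rewrite (hom_uip_refl e); simpl.
  rewrite (vcomp_idl HK); reflexivity.
Qed.

Lemma pack_hcomp {a b c : Ob K} {g g' : Hom b c} {f f' : Hom a b}
  (x : Cell g g') (y : Cell f f') : pack (hcomp x y) = phcomp (pack x) (pack y).
Proof. reflexivity. Qed.

Lemma pack_eqcell {a b : Ob K} {f g : Hom a b} (e : f = g) : pack (eqcell e) = pid f.
Proof. destruct e; reflexivity. Qed.

Lemma pack_id2 {a b : Ob K} (f : Hom a b) : pack (id2 f) = pid f.
Proof. reflexivity. Qed.

Ltac destruct_pcell X :=
  let f := fresh "f" in let g := fresh "g" in let x := fresh "x" in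
  destruct X as [f [g [x|]]].
Ltac case_endpoints :=
  match goal with |- context [excluded_middle_informative ?Q] =>
    let e := fresh "e" in
    destruct (excluded_middle_informative Q) as [e|?]; [try rewrite (hom_uip_refl e)|]
  end.
Ltac unfold_pcell := cbn [src tgt cell_of pvcomp phcomp pack pid projT1 projT2] in *.

Lemma pvcomp_assoc {a b : Ob K} (X Y Z : pcell a b) :
  pvcomp X (pvcomp Y Z) = pvcomp (pvcomp X Y) Z.
Proof.
  destruct_pcell X; destruct_pcell Y; destruct_pcell Z; unfold pvcomp; unfold_pcell;
    repeat (case_endpoints; simpl; try subst); try contradiction; try reflexivity.
  cbn [eqcell]; rewrite !(vcomp_idl HK), (vcomp_assoc HK); reflexivity.
Qed.

Lemma pvcomp_pidl {a b : Ob K} (g : Hom a b) (X : pcell a b) :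
  tgt X = g -> pvcomp (pid g) X = X.
Proof.
  destruct_pcell X; unfold_pcell; intros <-; unfold pvcomp; unfold_pcell;
    case_endpoints; simpl; try contradiction; try reflexivity.
  cbn [eqcell]; rewrite !(vcomp_idl HK); reflexivity.
Qed.

Lemma pvcomp_pidr {a b : Ob K} (g : Hom a b) (X : pcell a b) :
  src X = g -> pvcomp X (pid g) = X.
Proof.
  destruct_pcell X; unfold_pcell; intros <-; unfold pvcomp; unfold_pcell;
    case_endpoints; simpl; try contradiction; try reflexivity.
  cbn [eqcell]; rewrite (vcomp_idl HK), (vcomp_idr HK); reflexivity.
Qed.

Lemma phcomp_pvcomp {a b c : Ob K} (X X' : pcell b c) (Y Y' : pcell a b) :
  tgt X = src X' -> tgt Y = src Y' ->
  phcomp (pvcomp X' X) (pvcomp Y' Y) = pvcomp (phcomp X' Y') (phcomp X Y).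
Proof.
  destruct_pcell X; destruct_pcell X'; destruct_pcell Y; destruct_pcell Y';
    unfold_pcell; intros <- <-; unfold pvcomp, phcomp; unfold_pcell;
    repeat (case_endpoints; simpl; try contradiction); try reflexivity.
  cbn [eqcell]; rewrite !(vcomp_idl HK), (interchange HK); reflexivity.
Qed.

Lemma phcomp_pid {a b c : Ob K} (g : Hom b c) (f : Hom a b) :
  phcomp (pid g) (pid f) = pid (comp1 g f).
Proof. unfold phcomp; unfold_pcell; rewrite (hcomp_id2 HK); reflexivity. Qed.

Lemma junk_endpoints {a b : Ob K} (f f' g g' : Hom a b) : f = f' -> g = g' ->
  (existT _ f (existT _ g None) : pcell a b) = existT _ f' (existT _ g' None).
Proof. intros <- <-; reflexivity. Qed.

Lemma phcomp_assoc {a b c d : Ob K} (X : pcell c d) (Y : pcell b c) (Z : pcell a b) :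
  phcomp X (phcomp Y Z) = phcomp (phcomp X Y) Z.
Proof.
  destruct_pcell X; destruct_pcell Y; destruct_pcell Z; unfold phcomp; unfold_pcell;
    try (apply junk_endpoints; apply (comp1_assoc HK)).
  pose proof (f_equal pack (hcomp_assoc HK x x0 x1)) as E.
  rewrite !pack_vcomp, !pack_eqcell, pvcomp_pidl, pvcomp_pidr in E;
    [exact E | symmetry; apply (comp1_assoc HK) | reflexivity].
Qed.

Lemma phcomp_pidl {a b : Ob K} (X : pcell a b) : phcomp (pid (id1 b)) X = X.
Proof.
  destruct_pcell X; unfold phcomp; unfold_pcell;
    try (apply junk_endpoints; apply (comp1_idl HK)).
  pose proof (f_equal pack (hcomp_idl HK x)) as E.
  rewrite !pack_vcomp, !pack_eqcell, pvcomp_pidl, pvcomp_pidr in E;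
    [exact E | symmetry; apply (comp1_idl HK) | reflexivity].
Qed.

Lemma phcomp_pidr {a b : Ob K} (X : pcell a b) : phcomp X (pid (id1 a)) = X.
Proof.
  destruct_pcell X; unfold phcomp; unfold_pcell;
    try (apply junk_endpoints; apply (comp1_idr HK)).
  pose proof (f_equal pack (hcomp_idr HK x)) as E.
  rewrite !pack_vcomp, !pack_eqcell, pvcomp_pidl, pvcomp_pidr in E;
    [exact E | symmetry; apply (comp1_idr HK) | reflexivity].
Qed.

Lemma phcomp_whiskerRL {a b c : Ob K} (X : pcell b c) (Y : pcell a b) g f :
  tgt Y = g -> src X = f -> phcomp X Y = pvcomp (phcomp X (pid g)) (phcomp (pid f) Y).
Proof.
  intros HY HX.
  rewrite <- (phcomp_pvcomp (pid f) X Y (pid g)) by (unfold_pcell; congruence).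
  rewrite pvcomp_pidr, pvcomp_pidl by (unfold_pcell; congruence); reflexivity.
Qed.

Lemma phcomp_whiskerLR {a b c : Ob K} (X : pcell b c) (Y : pcell a b) g f :
  tgt X = g -> src Y = f -> phcomp X Y = pvcomp (phcomp (pid g) Y) (phcomp X (pid f)).
Proof.
  intros HX HY.
  rewrite <- (phcomp_pvcomp X (pid g) (pid f) Y) by (unfold_pcell; congruence).
  rewrite pvcomp_pidr, pvcomp_pidl by (unfold_pcell; congruence); reflexivity.
Qed.

Lemma pvcomp_whiskerl {a b c : Ob K} (g : Hom b c) (X Y : pcell a b) :
  tgt Y = src X -> pvcomp (phcomp (pid g) X) (phcomp (pid g) Y) = phcomp (pid g) (pvcomp X Y).
Proof.
  intros H; rewrite <- (phcomp_pvcomp (pid g) (pid g) Y X) by (unfold_pcell; auto).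
  rewrite pvcomp_pidl by (unfold_pcell; auto); reflexivity.
Qed.

Lemma pvcomp_whiskerr {a b c : Ob K} (X Y : pcell b c) (g : Hom a b) :
  tgt Y = src X -> pvcomp (phcomp X (pid g)) (phcomp Y (pid g)) = phcomp (pvcomp X Y) (pid g).
Proof.
  intros H; rewrite <- (phcomp_pvcomp Y X (pid g) (pid g)) by (unfold_pcell; auto).
  rewrite pvcomp_pidl by (unfold_pcell; auto); reflexivity.
Qed.

Lemma phcomp_pid_comp1 {a b c d : Ob K} (g : Hom c d) (h : Hom b c) (X : pcell a b) :
  phcomp (pid (comp1 g h)) X = phcomp (pid g) (phcomp (pid h) X).
Proof. rewrite phcomp_assoc, phcomp_pid; reflexivity. Qed.

Lemma pvcomp_unit_natural {a b : Ob K} (E : pcell b b) (X : pcell a b) t f g :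
  src E = id1 b -> tgt E = t -> src X = f -> tgt X = g ->
  pvcomp (phcomp E (pid g)) X = pvcomp (phcomp (pid t) X) (phcomp E (pid f)).
Proof.
  intros HsE HtE HsX HtX.
  rewrite <- (phcomp_whiskerLR E X t f) by assumption.
  rewrite (phcomp_whiskerRL E X g (id1 b)) by assumption.
  rewrite phcomp_pidl; reflexivity.
Qed.

Lemma pvcomp_counit_interchange {a : Ob K} (E : pcell a a) h :
  tgt E = id1 a -> src E = h ->
  pvcomp E (phcomp (pid h) E) = pvcomp E (phcomp E (pid h)).
Proof.
  intros HtE HsE.
  rewrite <- (phcomp_pidr E) at 1; rewrite <- (phcomp_pidl E) at 3.
  rewrite <- (phcomp_whiskerRL E E (id1 a) h), (phcomp_whiskerLR E E (id1 a) h)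
    by assumption.
  reflexivity.
Qed.

End Packing.

Ltac endpoints HK :=
  cbn [src tgt cell_of pvcomp phcomp pack pid projT1 projT2];
  repeat progress (repeat rewrite <- (comp1_assoc HK);
                   repeat rewrite (comp1_idl HK); repeat rewrite (comp1_idr HK));
  reflexivity.

Section EMwCell.
Context {K : PreTwoCat} (HK : is_TwoCat K) {k k' : Ob K}.
Context (t : Hom k k) (mu : Cell (comp1 t t) t).
Context (t' : Hom k' k') (mu' : Cell (comp1 t' t') t') (eta' : Cell (id1 k') t').
Context (V : Hom k k') (psi : Cell (comp1 t' V) (comp1 V t)).

Hypothesis psi_mult :
  pvcomp (phcomp (pid V) (pack mu))
    (pvcomp (phcomp (pack psi) (pid t)) (phcomp (pid t') (pack psi)))
  = pvcomp (pack psi) (phcomp (pack mu') (pid V)).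
Hypothesis mu'_unit_l : pvcomp (pack mu') (phcomp (pack eta') (pid t')) = pid t'.
Hypothesis mu'_unit_r : pvcomp (pack mu') (phcomp (pid t') (pack eta')) = pid t'.

Lemma EMw_unit_cancel_l :
  pvcomp (phcomp (pid V) (pack mu))
    (pvcomp (phcomp (pack psi) (pid t))
      (pvcomp (phcomp (pack eta') (pid (comp1 V t))) (pack psi)))
  = pack psi.
Proof.
  rewrite (pvcomp_unit_natural HK _ _ t' (comp1 t' V) (comp1 V t)) by endpoints HK.
  rewrite !(pvcomp_assoc HK) in psi_mult.
  rewrite !(pvcomp_assoc HK), psi_mult, <- (pvcomp_assoc HK).
  rewrite <- (phcomp_pid HK t' V), (phcomp_assoc HK), (pvcomp_whiskerr HK) by endpoints HK.
  rewrite mu'_unit_l, (phcomp_pid HK), (pvcomp_pidr HK) by endpoints HK.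
  reflexivity.
Qed.

Lemma EMw_unit_cancel_r :
  pvcomp (phcomp (pid V) (pack mu))
    (pvcomp (phcomp (pack psi) (pid t))
      (pvcomp (phcomp (pid t') (pack psi)) (phcomp (pid t') (phcomp (pack eta') (pid V)))))
  = pack psi.
Proof.
  rewrite !(pvcomp_assoc HK) in psi_mult.
  rewrite !(pvcomp_assoc HK), psi_mult, <- (pvcomp_assoc HK).
  rewrite (phcomp_assoc HK), (pvcomp_whiskerr HK) by endpoints HK.
  rewrite mu'_unit_r, (phcomp_pid HK), (pvcomp_pidr HK) by endpoints HK.
  reflexivity.
Qed.

End EMwCell.

Section EMwResolution.
Context {K : PreTwoCat} (HK : is_TwoCat K) {k k' j : Ob K}.
Context (f : Hom k j) (v : Hom j k) (eps : Cell (comp1 f v) (id1 j)).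
Context (mu : Cell (comp1 (comp1 v f) (comp1 v f)) (comp1 v f)).
Context (t' : Hom k' k') (mu' : Cell (comp1 t' t') t') (eta' : Cell (id1 k') t').
Context (V : Hom k k') (psi : Cell (comp1 t' V) (comp1 V (comp1 v f))).

Hypothesis mu_counit : pack mu = phcomp (phcomp (pid v) (pack eps)) (pid f).

Local Notation veps := (phcomp (pid v) (pack eps)).
Local Notation Vveps := (phcomp (pid (comp1 V v)) (pack eps)).
Local Notation psiv := (phcomp (pack psi) (pid v)).
Local Notation eta'Vv := (phcomp (pack eta') (pid (comp1 V v))).

Lemma vcounit_mu :
  pvcomp veps (phcomp (pid (comp1 v f)) veps) = pvcomp veps (phcomp (pack mu) (pid v)).
Proof.
  rewrite mu_counit, <- (phcomp_assoc HK), (phcomp_pid HK), <- (phcomp_assoc HK).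
  rewrite (phcomp_pid_comp1 HK), <- (phcomp_pid_comp1 HK f v).
  rewrite !(pvcomp_whiskerl HK) by endpoints HK.
  rewrite (pvcomp_counit_interchange HK) by endpoints HK.
  reflexivity.
Qed.

Lemma psi_counit_natural :
  pvcomp psiv (phcomp (pid t') Vveps)
  = pvcomp (phcomp (pid (comp1 V (comp1 v f))) veps)
      (phcomp (pack psi) (pid (comp1 v (comp1 f v)))).
Proof.
  transitivity (phcomp (pack psi) veps).
  - rewrite (phcomp_whiskerRL HK (pack psi) veps v (comp1 t' V)) by endpoints HK.
    rewrite !(phcomp_pid_comp1 HK); reflexivity.
  - apply (phcomp_whiskerLR HK); endpoints HK.
Qed.

Lemma Vvcounit_mu :
  pvcomp Vveps (phcomp (pid (comp1 V (comp1 v f))) veps)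
  = pvcomp Vveps (phcomp (phcomp (pid V) (pack mu)) (pid v)).
Proof.
  rewrite (phcomp_pid_comp1 HK V v), (phcomp_pid_comp1 HK V (comp1 v f)).
  rewrite <- (phcomp_assoc HK).
  rewrite !(pvcomp_whiskerl HK), vcounit_mu by endpoints HK.
  reflexivity.
Qed.

Hypothesis psi_mult :
  pvcomp (phcomp (pid V) (pack mu))
    (pvcomp (phcomp (pack psi) (pid (comp1 v f))) (phcomp (pid t') (pack psi)))
  = pvcomp (pack psi) (phcomp (pack mu') (pid V)).
Hypothesis mu'_unit_r : pvcomp (pack mu') (phcomp (pid t') (pack eta')) = pid t'.

Lemma EMw_counit_cancel :
  pvcomp Vveps (pvcomp psiv
    (pvcomp (phcomp (pid t') Vveps) (pvcomp (phcomp (pid t') psiv) (phcomp (pid t') eta'Vv))))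
  = pvcomp Vveps psiv.
Proof.
  rewrite (pvcomp_assoc HK psiv), psi_counit_natural.
  rewrite <- (pvcomp_assoc HK (phcomp (pid (comp1 V (comp1 v f))) veps)).
  rewrite (pvcomp_assoc HK Vveps), Vvcounit_mu, <- (pvcomp_assoc HK).
  f_equal.
  rewrite (comp1_assoc HK v f v), <- (phcomp_pid HK (comp1 v f) v), (phcomp_assoc HK (pack psi)).
  rewrite (phcomp_assoc HK (pid t') (pack psi)), <- (phcomp_pid HK V v).
  rewrite (phcomp_assoc HK (pack eta')), (phcomp_assoc HK (pid t')).
  rewrite !(pvcomp_whiskerr HK) by endpoints HK.
  rewrite (EMw_unit_cancel_r HK _ mu t' mu' eta' V psi psi_mult mu'_unit_r).
  reflexivity.
Qed.

Lemma EMw_idempotent :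
  pvcomp (pvcomp Vveps (pvcomp psiv eta'Vv)) (pvcomp Vveps (pvcomp psiv eta'Vv))
  = pvcomp Vveps (pvcomp psiv eta'Vv).
Proof.
  rewrite <- !(pvcomp_assoc HK).
  rewrite (pvcomp_assoc HK eta'Vv).
  rewrite (pvcomp_unit_natural HK _ _ t' (comp1 (comp1 V (comp1 v f)) v)) by endpoints HK.
  rewrite <- (pvcomp_assoc HK), (pvcomp_assoc HK (phcomp (pack eta') _) psiv).
  rewrite (pvcomp_unit_natural HK _ _ t' (comp1 t' (comp1 V v))) by endpoints HK.
  rewrite <- (pvcomp_assoc HK).
  rewrite (pvcomp_unit_natural HK _ _ t' (comp1 V v)) by endpoints HK.
  pose proof EMw_counit_cancel as cancel.
  rewrite !(pvcomp_assoc HK) in cancel; rewrite !(pvcomp_assoc HK), cancel.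
  reflexivity.
Qed.

End EMwResolution.

Ltac pack_cells HK :=
  unfold cell_Vveps, cell_psiv, cell_eta'Vv, lw, rw;
  repeat (rewrite (pack_vcomp HK) || rewrite pack_hcomp || rewrite pack_eqcell
          || rewrite pack_id2);
  repeat rewrite (pvcomp_pidl HK) by endpoints HK;
  repeat rewrite (pvcomp_pidr HK) by endpoints HK.

Theorem lemma3p2 (K : PreTwoCat) (HK : is_TwoCat K)
  (k k' j : Ob K)
  (t : Hom k k) (mu : Cell (comp1 t t) t) (eta : Cell (id1 k) t)
  (t' : Hom k' k') (mu' : Cell (comp1 t' t') t') (eta' : Cell (id1 k') t')
  (Hmon : is_monad HK mu eta) (Hmon' : is_monad HK mu' eta')
  (V : Hom k k') (psi : Cell (comp1 t' V) (comp1 V t))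
  (Hpsi : is_EMw_1cell HK mu mu' psi)
  (f : Hom k j) (v : Hom j k) (eps : Cell (comp1 f v) (id1 j))
  (Ht : t = comp1 v f)
  (Hres : is_resolution HK mu eta eps Ht) :
  let e := vcomp (cell_Vveps HK Ht eps V)
             (vcomp (cell_psiv HK psi v) (cell_eta'Vv HK eta' V v)) in
  vcomp e e = e
  /\ vcomp (lw V mu)
       (vcomp (eqcell (eq_sym (comp1_assoc HK V t t)))
         (vcomp (rw psi t)
           (vcomp (eqcell (comp1_assoc HK t' V t))
             (vcomp (rw eta' (comp1 V t))
               (vcomp (eqcell (eq_sym (comp1_idl HK (comp1 V t)))) psi)))))
     = psi
  /\ vcomp (cell_Vveps HK Ht eps V)
       (vcomp (cell_psiv HK psi v)
         (vcomp (lw t' (cell_Vveps HK Ht eps V))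
           (vcomp (lw t' (cell_psiv HK psi v))
             (lw t' (cell_eta'Vv HK eta' V v)))))
     = vcomp (cell_Vveps HK Ht eps V) (cell_psiv HK psi v).
Proof.
  intros e; subst e.
  destruct Hmon' as [_ [mu'_unit_l mu'_unit_r]], Hres as [mu_counit _].
  unfold is_EMw_1cell in Hpsi.
  subst t.
  apply (f_equal pack) in mu'_unit_l, mu'_unit_r, mu_counit, Hpsi.
  revert mu'_unit_l mu'_unit_r mu_counit Hpsi; pack_cells HK;
    intros mu'_unit_l mu'_unit_r mu_counit psi_mult.
  split; [|split]; apply (pack_inj HK); pack_cells HK.
  - eapply EMw_idempotent; eassumption.
  - eapply EMw_unit_cancel_l; eassumption.
  - eapply EMw_counit_cancel; eassumption.
Qed.
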